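(* Let $\mathcal{F}$ be a set of reductions. The following are equivalent: (i) for every family $\{f_k:k\in\omega\}\subseteq\mathcal{F}$, the function $\overline{\bigoplus}_k f_k$ belongs to $\mathcal{F}$; (ii) for every family $\{f_k:k\in\omega\}\subseteq\mathcal{F}$, the function $\bigcup_k(f_k\restriction\mathbf{N}_{\langle k\rangle})$ belongs to $\mathcal{F}$, and $\mathsf{Lip}\subseteq\mathcal{F}$.
   Context: $\mathbb{R}={}^\omega\omega$ with metric $d(x,y)=2^{-n}$, $n$ least with $x(n)\neq y(n)$ ($d(x,x)=0$); $\mathbf{N}_s=\{x:s\subseteq x\}$. For $C>0$, $\mathsf{Lip}(C)$ is the set of $f:\mathbb{R}\to\mathbb{R}$ with $d(f(x),f(y))\le C\,d(x,y)$; $\mathsf{Lip}=\bigcup_{k\in\mathbb{Z}}\mathsf{Lip}(2^k)$ and $\mathsf{L}=\mathsf{Lip}(1)$. A set of reductions is a set $\mathcal{F}$ of functions $\mathbb{R}\to\mathbb{R}$ closed under composition, with $\mathsf{L}\subseteq\mathcal{F}$, admitting a surjection $\mathbb{R}\twoheadrightarrow\mathcal{F}$. For $x\in\mathbb{R}$, $x^-=\langle x(n+1):n\in\omega\rangle$, and $\overline{\bigoplus}_k f_k(x)=f_{x(0)}(x^-)$. $\bigcup_k(f_k\restriction\mathbf{N}_{\langle k\rangle})$ is the function agreeing with $f_k$ on $\mathbf{N}_{\langle k\rangle}$ for each $k$. *)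

From Stdlib Require Import Reals ZArith ClassicalEpsilon.
Open Scope R_scope.

Definition Baire := nat -> nat.

(* the least n with x(n) <> y(n) (meaningful when x <> y) *)
Definition first_diff (x y : Baire) : nat :=
  epsilon (inhabits 0%nat)
    (fun n => x n <> y n /\ forall m, (m < n)%nat -> x m = y m).

Definition dist (x y : Baire) : R :=
  match excluded_middle_informative (x = y) with
  | left _ => 0
  | right _ => / (2 ^ first_diff x y)
  end.

Definition Lipschitz (C : R) (f : Baire -> Baire) : Prop :=
  forall x y, dist (f x) (f y) <= C * dist x y.

Definition Lip (f : Baire -> Baire) : Prop :=
  exists k : Z, Lipschitz (powerRZ 2 k) f.

Definition Lip1 (f : Baire -> Baire) : Prop := Lipschitz 1 f.

Definition set_of_reductions (F : (Baire -> Baire) -> Prop) : Prop :=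
  (forall f g, F f -> F g -> F (fun x => f (g x))) /\
  (forall f, Lip1 f -> F f) /\
  (exists s : Baire -> (Baire -> Baire),
      (forall x, F (s x)) /\ (forall f, F f -> exists x, s x = f)).

Definition shift (x : Baire) : Baire := fun n => x (S n).

Definition bar_oplus (fs : nat -> Baire -> Baire) : Baire -> Baire :=
  fun x => fs (x 0%nat) (shift x).

(* U_k (f_k restricted to N_<k>): agrees with f_k on N_<k> *)
Definition glue_restr (fs : nat -> Baire -> Baire) : Baire -> Baire :=
  fun x => fs (x 0%nat) x.

From Pilot Require Import Defs.
From Stdlib Require Import Reals ZArith ClassicalEpsilon.
From Stdlib Require Import Lra Lia Classical FunctionalExtensionality.
Open Scope R_scope.

(* (i) => (ii): a Lip(2) function f is the bar-sum of the Lip(1) functions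
   y |-> f(<k> ^ y), so by induction every Lip(2^n) function is in F; and
   glue_restr fs is the bar-sum of the maps fs k composed with y |-> <k> ^ y.
   (ii) => (i): bar_oplus fs glues the maps fs k composed with the shift, which
   is Lip(2). *)

Definition bcons (k : nat) (y : Baire) : Baire :=
  fun n => match n with O => k | S m => y m end.

Lemma bcons_shift (x : Baire) : bcons (x 0%nat) (Defs.shift x) = x.
Proof. apply functional_extensionality; intros [|n]; reflexivity. Qed.

Definition is_first_diff (x y : Baire) (n : nat) : Prop :=
  x n <> y n /\ forall m, (m < n)%nat -> x m = y m.

Lemma is_first_diff_unique x y n m :
  is_first_diff x y n -> is_first_diff x y m -> n = m.
Proof.
  intros [Hn Hltn] [Hm Hltm].
  destruct (Nat.lt_trichotomy n m) as [h|[h|h]]; [|exact h|].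
  - contradiction (Hn (Hltm n h)).
  - contradiction (Hm (Hltn m h)).
Qed.

Lemma is_first_diff_exists x y : x <> y -> exists n, is_first_diff x y n.
Proof.
  intros Hxy.
  assert (Hex : exists n, x n <> y n).
  { apply NNPP; intro H; apply Hxy, functional_extensionality.
    intro n; apply NNPP; intro H'; apply H; eauto. }
  destruct Hex as [n Hn]; revert Hn.
  induction n as [n IH] using (well_founded_ind lt_wf); intro Hn.
  destruct (classic (forall m, (m < n)%nat -> x m = y m)) as [H|H].
  - exists n; split; assumption.
  - apply not_all_ex_not in H as [m Hm].
    apply imply_to_and in Hm as [Hmn Hm].
    exact (IH m Hmn Hm).
Qed.

Lemma first_diffP x y : x <> y -> is_first_diff x y (first_diff x y).
Proof.
  intro Hxy; apply (epsilon_spec (inhabits 0%nat) (is_first_diff x y)).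
  exact (is_first_diff_exists x y Hxy).
Qed.

Lemma dist_eq x y : x = y -> Defs.dist x y = 0.
Proof. intro H; unfold Defs.dist; destruct excluded_middle_informative; tauto. Qed.

Lemma dist_neq x y : x <> y -> Defs.dist x y = / 2 ^ first_diff x y.
Proof. intro H; unfold Defs.dist; destruct excluded_middle_informative; tauto. Qed.

Lemma inv_pow2_le1 n : / 2 ^ n <= 1.
Proof. rewrite <- Rinv_1; apply Rinv_le_contravar; [lra | apply pow_R1_Rle; lra]. Qed.

Lemma dist_ge0 x y : 0 <= Defs.dist x y.
Proof.
  unfold Defs.dist; destruct excluded_middle_informative; [lra|].
  apply Rlt_le, Rinv_0_lt_compat, pow_lt; lra.
Qed.

Lemma dist_le1 x y : Defs.dist x y <= 1.
Proof.
  unfold Defs.dist; destruct excluded_middle_informative; [lra | apply inv_pow2_le1].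
Qed.

Lemma dist_head_neq x y : x 0%nat <> y 0%nat -> Defs.dist x y = 1.
Proof.
  intro H; assert (Hxy : x <> y) by (intros ->; congruence).
  rewrite dist_neq by exact Hxy.
  replace (first_diff x y) with 0%nat; [simpl; lra|].
  apply (is_first_diff_unique x y); [split; [exact H | lia] | exact (first_diffP x y Hxy)].
Qed.

Lemma dist_head_eq x y : x 0%nat = y 0%nat ->
  Defs.dist x y = / 2 * Defs.dist (Defs.shift x) (Defs.shift y).
Proof.
  intro H; destruct (classic (x = y)) as [<-|Hxy].
  - rewrite !dist_eq by reflexivity; lra.
  - assert (Hsh : Defs.shift x <> Defs.shift y).
    { intro E; apply Hxy, functional_extensionality; intros [|k]; [exact H|].
      exact (f_equal (fun z => z k) E). }
    rewrite !dist_neq by assumption.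
    replace (first_diff x y) with (S (first_diff (Defs.shift x) (Defs.shift y))).
    + simpl; apply Rinv_mult.
    + destruct (first_diffP _ _ Hsh) as [Hd Hlt].
      apply (is_first_diff_unique x y); [split; [exact Hd|] | exact (first_diffP x y Hxy)].
      intros [|m] Hm; [exact H | apply (Hlt m); lia].
Qed.

Lemma dist_bcons k y y' : Defs.dist (bcons k y) (bcons k y') = / 2 * Defs.dist y y'.
Proof. apply dist_head_eq; reflexivity. Qed.

Lemma Lipschitz_le C C' f : C <= C' -> Lipschitz C f -> Lipschitz C' f.
Proof.
  intros HC Hf x y; specialize (Hf x y).
  pose proof (Rmult_le_compat_r _ _ _ (dist_ge0 x y) HC); lra.
Qed.

Lemma Lipschitz_bcons k : Lip1 (bcons k).
Proof. intros y y'; rewrite dist_bcons; pose proof (dist_ge0 y y'); lra. Qed.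

Lemma Lip_shift : Lip Defs.shift.
Proof.
  exists 1%Z; intros x y; simpl; destruct (Nat.eq_dec (x 0%nat) (y 0%nat)) as [e|e].
  - rewrite (dist_head_eq x y e); lra.
  - rewrite (dist_head_neq x y e); pose proof (dist_le1 (Defs.shift x) (Defs.shift y)); lra.
Qed.

Lemma Lipschitz_comp_bcons C f k :
  Lipschitz (2 * C) f -> Lipschitz C (fun y => f (bcons k y)).
Proof.
  intros Hf y y'; specialize (Hf (bcons k y) (bcons k y')).
  rewrite dist_bcons in Hf; lra.
Qed.

Lemma bar_oplus_comp_bcons f : bar_oplus (fun k y => f (bcons k y)) = f.
Proof.
  apply functional_extensionality; intro x; unfold bar_oplus; now rewrite bcons_shift.
Qed.

Lemma glue_restr_bar_oplus fs :
  glue_restr fs = bar_oplus (fun k y => fs k (bcons k y)).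
Proof.
  apply functional_extensionality; intro x; unfold bar_oplus, glue_restr; now rewrite bcons_shift.
Qed.

Lemma bar_oplus_glue_restr fs :
  bar_oplus fs = glue_restr (fun k x => fs k (Defs.shift x)).
Proof. reflexivity. Qed.

Section ReductionClass.

Variable F : (Baire -> Baire) -> Prop.
Hypothesis F_comp : forall f g, F f -> F g -> F (fun x => f (g x)).
Hypothesis F_Lip1 : forall f, Lip1 f -> F f.

Definition closed_bar_oplus : Prop :=
  forall fs : nat -> Baire -> Baire, (forall k, F (fs k)) -> F (bar_oplus fs).

Definition closed_glue_restr : Prop :=
  forall fs : nat -> Baire -> Baire, (forall k, F (fs k)) -> F (glue_restr fs).

Lemma closed_bar_oplus_glue_restr : closed_bar_oplus -> closed_glue_restr.
Proof.
  intros Hbar fs Hfs; rewrite glue_restr_bar_oplus.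
  apply Hbar; intro k; apply (F_comp (fs k) (bcons k) (Hfs k)), F_Lip1, Lipschitz_bcons.
Qed.

Lemma closed_bar_oplus_Lipschitz_pow2 :
  closed_bar_oplus -> forall n f, Lipschitz (2 ^ n) f -> F f.
Proof.
  intros Hbar n; induction n as [|n IH]; intros f Hf; [exact (F_Lip1 f Hf)|].
  rewrite <- bar_oplus_comp_bcons; apply Hbar; intro k.
  apply IH, Lipschitz_comp_bcons, Hf.
Qed.

Lemma closed_bar_oplus_Lip : closed_bar_oplus -> forall f, Lip f -> F f.
Proof.
  intros Hbar f [[|p|p] Hf].
  - exact (F_Lip1 f Hf).
  - exact (closed_bar_oplus_Lipschitz_pow2 Hbar (Pos.to_nat p) f Hf).
  - apply F_Lip1; exact (Lipschitz_le _ _ f (inv_pow2_le1 _) Hf).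
Qed.

Lemma closed_glue_restr_bar_oplus :
  closed_glue_restr -> F Defs.shift -> closed_bar_oplus.
Proof.
  intros Hglue Hshift fs Hfs; rewrite bar_oplus_glue_restr.
  apply Hglue; intro k; exact (F_comp (fs k) Defs.shift (Hfs k) Hshift).
Qed.

End ReductionClass.

Theorem proposition4p1 (F : (Baire -> Baire) -> Prop) :
  set_of_reductions F ->
  ((forall fs : nat -> Baire -> Baire,
       (forall k, F (fs k)) -> F (bar_oplus fs))
   <->
   ((forall fs : nat -> Baire -> Baire,
       (forall k, F (fs k)) -> F (glue_restr fs))
    /\ (forall f, Lip f -> F f))).
Proof.
  intros [Hcomp [HLip1 _]]; split.
  - intro Hbar; split.
    + exact (closed_bar_oplus_glue_restr F Hcomp HLip1 Hbar).
    + exact (closed_bar_oplus_Lip F HLip1 Hbar).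
  - intros [Hglue HLip].
    exact (closed_glue_restr_bar_oplus F Hcomp Hglue (HLip _ Lip_shift)).
Qed.
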